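(* Let $X$ be a Banach space, $\mathfrak{L}$ a metric space of functions on $\mathbb{R}$, and $g\in\mathfrak{L}$ translation compact, with hull $\mathcal{H}(g)$, such that the translations $T(h)$ belong to $\mathcal{C}(\mathcal{H}(g),\mathcal{H}(g))$ for all $h\in\mathbb{R}$. Suppose that for every $f\in\mathcal{H}(g)$ the equation $\frac{d}{dt}u(t)=\mathcal{A}(u(t))+f(t)$ (with $\mathcal{A}$ a densely defined operator on $X$) is well posed for every initial datum $u_0\in X$ at every initial time $\tau\in\mathbb{R}$, generating a process $U_f(t,\tau)$ on $X$ (so $U_f(t,\tau)u_0=u(t)$, the solution with $u(\tau)=u_0$), and that $U_f(h+t,h+\tau)=U_{T(h)f}(t,\tau)$ for all $f\in\mathcal{H}(g)$, $h\in\mathbb{R}$, $t\ge\tau$. If the family $\{U_f(t,\tau)\}_{f\in\mathcal{H}(g)}$ is uniformly totally dissipative and asymptotically closed, then its uniform global attractor satisfies $$A_{\mathcal{H}(g)}=\bigcup_{f\in\mathcal{H}(g)}\{u(0): u \text{ is a complete bounded trajectory of } U_f(t,\tau)\}.$$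
   Context: A process on $X$ is a family of maps $U(t,\tau):X\to X$, $t\ge\tau$, with $U(\tau,\tau)=\mathrm{id}_X$ and $U(t,\tau)=U(t,s)U(s,\tau)$ for $t\ge s\ge\tau$. $g$ is translation compact in $\mathfrak{L}$ if $\{g(\cdot+h):h\in\mathbb{R}\}$ is precompact in $\mathfrak{L}$; its closure in $\mathfrak{L}$ is the hull $\mathcal{H}(g)$ (a compact metric space). $[T(h)f](t)=f(h+t)$. The symbol space of the family is $\Sigma=\mathcal{H}(g)$. For nonempty $B,C\subset X$, $\delta_X(B,C)=\sup_{x\in B}\inf_{\xi\in C}\|x-\xi\|$. A set $K\subset X$ is uniformly attracting if for every bounded $C\subset X$, $\lim_{t-\tau\to\infty}\sup_{f\in\mathcal{H}(g)}\delta_X(U_f(t,\tau)C,K)=0$; the uniform global attractor $A_{\mathcal{H}(g)}$ is the compact uniformly attracting set contained in every compact uniformly attracting set. The family is uniformly totally dissipative if for every $\varepsilon>0$ there is a finite set $M_\varepsilon\subset X$ whose open $\varepsilon$-neighborhood $\mathcal{U}_\varepsilon(M_\varepsilon)$ is uniformly absorbing, i.e. for each bounded $C$ there is $t_e$ with $U_f(t,\tau)C\subset\mathcal{U}_\varepsilon(M_\varepsilon)$ for all $f$ whenever $t-\tau\ge t_e$. The family is asymptotically closed if there is a (finite with at least two terms, or infinite) sequence $0=h_0<h_1<h_2<\cdots$ such that whenever $f_n\to f$ in $\mathcal{H}(g)$ and $U_{f_n}(h_k,0)x_n\to\xi^k\in X$ as $n\to\infty$ for every $k$, then $U_f(h_k,0)\xi^0=\xi^k$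 for every $k$. A complete bounded trajectory of $U_f(t,\tau)$ is a function $u:\mathbb{R}\to X$ with bounded range and $u(s)=U_f(s,\tau)u(\tau)$ for all $s\ge\tau$, $\tau\in\mathbb{R}$. *)

From HB Require Import structures.
From mathcomp Require Import all_boot all_order all_algebra.
From mathcomp Require Import all_classical all_reals all_analysis.
Set Implicit Arguments. Unset Strict Implicit. Unset Printing Implicit Defensive.
Import Order.TTheory GRing.Theory Num.Theory.
Import numFieldNormedType.Exports.
Local Open Scope classical_set_scope.
Local Open Scope ring_scope.

Section Defs.
Variables (R : realType) (X : normedModType R) (L : Type).

(* The family of maps U f t tau : X -> X, indexed by symbols f : L. *)
Definition process_family := L -> R -> R -> X -> X.

Definition is_process (U : R -> R -> X -> X) : Prop :=
  (forall tau, U tau tau = id) /\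
  (forall t s tau, tau <= s -> s <= t -> U t tau = U t s \o U s tau).

Definition hdist (B C : set X) : \bar R :=
  ereal_sup [set ereal_inf [set (`|x - xi|)%:E | xi in C] | x in B].

Definition unif_attracting (Sigma : set L) (U : process_family) (K : set X) : Prop :=
  forall C : set X, bounded_set C ->
  forall eps : R, 0 < eps -> exists T0 : R, forall t tau : R, T0 <= t - tau ->
    (ereal_sup [set hdist (U f t tau @` C) K | f in Sigma] <= eps%:E)%E.

Definition is_uniform_global_attractor (Sigma : set L) (U : process_family) (A : set X)
  : Prop :=
  compact A /\ unif_attracting Sigma U A /\
  (forall K : set X, compact K -> unif_attracting Sigma U K -> A `<=` K).

Definition eps_nbhd (eps : R) (M : set X) : set X :=
  [set y | exists2 m, M m & `|y - m| < eps].

Definition unif_absorbing (Sigma : set L) (U : process_family) (B : set X) : Prop :=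
  forall C : set X, bounded_set C -> exists te : R,
    forall f, Sigma f -> forall t tau : R, te <= t - tau -> U f t tau @` C `<=` B.

Definition unif_totally_dissipative (Sigma : set L) (U : process_family) : Prop :=
  forall eps : R, 0 < eps -> exists M : set X,
    finite_set M /\ unif_absorbing Sigma U (eps_nbhd eps M).

(* index set of the sequence h_0 < h_1 < ... : {0..N-1} if finite (N >= 2),
   all of nat if infinite *)
Definition seq_index (n : option nat) (k : nat) : Prop :=
  match n with Some N => (k < N)%N | None => True end.

End Defs.

Definition asymptotically_closed (R : realType) (X : normedModType R)
  (L : topologicalType) (Sigma : set L) (U : process_family X L) : Prop :=
  exists (n : option nat) (h : nat -> R),
    (match n with Some N => (2 <= N)%N | None => True end) /\
    h 0%N = 0 /\
    (forall k, seq_index n k.+1 -> h k < h k.+1) /\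
    (forall (fn : nat -> L) (f : L) (xn : nat -> X) (xi : nat -> X),
       (forall m, Sigma (fn m)) -> Sigma f ->
       fn @ \oo --> f ->
       (forall k, seq_index n k -> (fun m => U (fn m) (h k) 0 (xn m)) @ \oo --> xi k) ->
       forall k, seq_index n k -> U f (h k) 0 (xi 0%N) = xi k).

Definition complete_bounded_trajectory (R : realType) (X : normedModType R)
  (V : R -> R -> X -> X) (u : R -> X) : Prop :=
  bounded_set (range u) /\ (forall s tau : R, tau <= s -> u s = V s tau (u tau)).

(* Uniform total dissipativity gives, for every eps, one finite eps-net eventually
   absorbing every bounded set uniformly in the symbol.  The heart of the proof is a
   compactness statement: for symbols g_m, initial times -s_m with s_m -> oo and bounded
   data x_m, the points U_{g_m}(0, -s_m) x_m cluster at the value u(0) of a complete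
   bounded trajectory.  Along an ultrafilter on the indices, U_{g_m}(t, -s_m) x_m converges
   for each t (the finite nets make it Cauchy) and g_m converges in the compact hull to f;
   asymptotic closedness, applied along a diagonal subsequence, shows that the limits w
   satisfy U_{T(t)f}(h_1, 0) w(t) = w(t + h_1), so w glued backwards in steps of length
   h_1 is a trajectory of U_f.  Compactness of the candidate, uniform attraction (by
   contradiction) and minimality (every compact uniformly attracting set is closed and
   lies within eps of each u(0)) then follow. *)

From HB Require Import structures.
From mathcomp Require Import all_boot all_order all_algebra.
From mathcomp Require Import all_classical all_reals all_analysis.
From mathcomp Require Import ring lra.
Set Implicit Arguments.
Unset Strict Implicit.
Unset Printing Implicit Defensive.

Import Order.TTheory GRing.Theory Num.Theory.
Import numFieldNormedType.Exports.
Local Open Scope classical_set_scope.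
Local Open Scope ring_scope.

Lemma filter_forall_leq (I : Type) (F : set_system I) {FF : Filter F} (P : nat -> set I) :
  (forall k, F (P k)) -> forall n, F [set m | forall k, (k <= n)%N -> P k m].
Proof.
move=> FP; elim=> [|n IH].
  by apply: filterS (FP 0%N) => m Pm k; rewrite leqn0 => /eqP ->.
apply: filterS (filterI IH (FP n.+1)) => m [Pm Pn] k.
by rewrite leq_eqVlt => /orP[/eqP -> //|]; rewrite ltnS; exact: Pm.
Qed.

Lemma filter_diagonal (F : set_system nat) {FF : ProperFilter F} (E : nat -> set nat) :
  (forall i, F (E i)) -> exists phi : nat -> nat, forall n i, (i <= n)%N -> E i (phi n).
Proof.
move=> FE; have Eleq n : exists m, forall i, (i <= n)%N -> E i m.
  exact: filter_ex (filter_forall_leq FE n).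
by have [phi phiP] := choice Eleq; exists phi.
Qed.

Lemma ultra_has_seq (I : Type) (F : set_system I) {FF : ProperFilter F}
    (F_ultra : forall A, F A \/ F (~` A)) (Y : eqType) (P : Y -> set I) (s : seq Y) :
  F [set m | exists2 p, p \in s & P p m] -> exists2 p, p \in s & F (P p).
Proof.
elim: s => [|a s IH] Fs.
  by exfalso; apply: (filter_not_empty F); apply: filterS Fs => m [p].
case: (F_ultra (P a)) => [Pa|nPa]; first by exists a => //; rewrite inE eqxx.
have [p ps Pp] : exists2 p, p \in s & F (P p).
  apply: IH; apply: filterS (filterI Fs nPa) => m [[p]].
  by rewrite inE => /orP[/eqP -> //|ps Pp _]; exists p.
by exists p => //; rewrite inE ps orbT.
Qed.

(* An ultrafilter containing a finite union of eps-balls contains one of them. *)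
Lemma ultra_finite_nets_cvg (R : realType) (X : completeNormedModType R)
    (G : set_system X) {GF : ProperFilter G} (G_ultra : forall A, G A \/ G (~` A)) :
  (forall eps, 0 < eps -> exists s : seq X,
      G [set y | exists2 p, p \in s & `|y - p| < eps]) ->
  cvg G.
Proof.
move=> nets; apply: cauchy_cvg; apply: cauchy_exP => eps eps_gt0.
have [s Gs] := nets eps eps_gt0.
have [p _ Gp] := ultra_has_seq G_ultra (P := fun p y => `|y - p| < eps) Gs.
by exists p; apply: filterS Gp => y; rewrite -ball_normE /= distrC.
Qed.

Lemma exists_nat_gt (R : realType) (x : R) : exists n : nat, x < n%:R.
Proof. by exists (Num.truncn x).+1; exact: truncnS_gt. Qed.

Lemma exists_invS_lt (R : realType) (eps : R) : 0 < eps -> exists i : nat, i.+1%:R^-1 < eps.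
Proof.
move=> eps_gt0; have [N _ lt_eps] := near_infty_natSinv_lt (PosNum eps_gt0).
by exists N; exact: (lt_eps N (leqnn N)).
Qed.

Lemma ler_invS (R : numFieldType) (i j : nat) : (i <= j)%N -> j.+1%:R^-1 <= i.+1%:R^-1 :> R.
Proof. by move=> ij; rewrite lef_pV2 ?posrE ?ltr0n // ler_nat ltnS. Qed.

Lemma bounded_set_of_norm_le (R : realType) (X : normedModType R) (A : set X) (rho : R) :
  (forall x, A x -> `|x| <= rho) -> bounded_set A.
Proof.
move=> Arho; exists rho; split; first by rewrite num_real.
by move=> M M_gt x Ax; exact: le_trans (Arho x Ax) (ltW M_gt).
Qed.

Section GluedTrajectory.
Variables (R : realType) (X : normedModType R) (V : R -> R -> X -> X) (a : R) (y : nat -> X).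
Hypotheses (V_process : is_process V) (a_gt0 : 0 < a).

Local Notation P j := (- (j%:R * a)).

Hypothesis y_step : forall j : nat, V (P j) (P j.+1) (y j.+1) = y j.

Lemma grid_nonincreasing i j : (i <= j)%N -> P j <= P i.
Proof. by move=> ij; rewrite lerN2 ler_wpM2r ?ler_nat ?ltW. Qed.

Definition grid_index (t : R) : nat := (Num.truncn (- t / a)).+1.

Lemma grid_index_le t : P (grid_index t) <= t.
Proof.
have := truncnS_gt (- t / a); rewrite ltr_pdivrMr // => lt_t; rewrite /grid_index; lra.
Qed.

Lemma glue_consistent j d t : P j <= t ->
  V t (P (j + d)) (y (j + d)) = V t (P j) (y j).
Proof.
move=> le_jt; elim: d => [|d IH]; first by rewrite addn0.
rewrite addnS (V_process.2 t (P (j + d)) (P (j + d).+1)) /=.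
- by rewrite y_step IH.
- exact: grid_nonincreasing.
- exact: le_trans (grid_nonincreasing (leq_addr d j)) le_jt.
Qed.

Definition glued_trajectory (t : R) : X := V t (P (grid_index t)) (y (grid_index t)).

Lemma glued_trajectoryE t j : P j <= t -> glued_trajectory t = V t (P j) (y j).
Proof.
move=> le_jt; rewrite /glued_trajectory; set i := grid_index t.
have le_it : P i <= t := grid_index_le t.
have := glue_consistent (maxn i j - i) le_it; have := glue_consistent (maxn i j - j) le_jt.
by rewrite !subnKC ?leq_maxl ?leq_maxr // => <- <-.
Qed.

Lemma glued_trajectory_flow s tau : tau <= s ->
  glued_trajectory s = V s tau (glued_trajectory tau).
Proof.
move=> le_tau_s; have le_jtau := grid_index_le tau.
rewrite (glued_trajectoryE (le_trans le_jtau le_tau_s)) (glued_trajectoryE le_jtau).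
by rewrite (V_process.2 s tau (P (grid_index tau))).
Qed.

Lemma glued_trajectory0 : glued_trajectory 0 = y 0.
Proof. by rewrite (@glued_trajectoryE 0 0) mul0r oppr0 // V_process.1. Qed.

End GluedTrajectory.

Definition kernel_sections (R : realType) (X : normedModType R) (L : Type)
    (Sigma : set L) (U : process_family X L) : set X :=
  [set x | exists2 f, Sigma f & exists2 u, complete_bounded_trajectory (U f) u & x = u 0].

Lemma hdist_le (R : realType) (X : normedModType R) (B C : set X) (eps : R) :
  (forall x, B x -> exists2 xi, C xi & `|x - xi| <= eps) -> (hdist B C <= eps%:E)%E.
Proof.
move=> near_C; apply: ge_ereal_sup => _ [x Bx <-].
have [xi Cxi le_eps] := near_C x Bx.
apply: le_trans (ereal_inf_lbound (ex_intro2 _ _ xi Cxi erefl)) _.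
by rewrite lee_fin.
Qed.

Lemma hdist_lt (R : realType) (X : normedModType R) (B C : set X) (d : R) (x : X) :
  (hdist B C < d%:E)%E -> B x -> exists2 xi, C xi & `|x - xi| < d.
Proof.
move=> lt_d Bx.
have : (ereal_inf [set (`|x - xi|)%:E | xi in C] < d%:E)%E.
  by apply: le_lt_trans lt_d; apply: ereal_sup_ubound; exists x.
by case/ereal_inf_lt => _ [xi Cxi <-]; rewrite lte_fin; exists xi.
Qed.

Section UniformAttractor.
Variables (R : realType) (X : completeNormedModType R) (L : metricType R)
  (T : R -> L -> L) (Sigma : set L) (U : L -> R -> R -> X -> X).
Hypotheses (Sigma_compact : compact Sigma)
  (T_Sigma : forall h, T h @` Sigma `<=` Sigma)
  (T_continuous : forall h, {within Sigma, continuous (T h)})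
  (U_process : forall f, Sigma f -> is_process (U f))
  (U_translate : forall f, Sigma f -> forall h t tau, tau <= t ->
     U f (h + t) (h + tau) = U (T h f) t tau)
  (U_dissipative : unif_totally_dissipative Sigma U)
  (U_asymp_closed : asymptotically_closed Sigma U).

Local Notation K := (kernel_sections Sigma U).

Lemma Sigma_T h f : Sigma f -> Sigma (T h f).
Proof. by move=> Sf; apply: T_Sigma; exists f. Qed.

Lemma U_shift f t0 tau r x : Sigma f -> tau <= t0 -> 0 <= r ->
  U (T t0 f) r 0 (U f t0 tau x) = U f (t0 + r) tau x.
Proof.
move=> Sf le_tau r_ge0; have le_t0 : t0 <= t0 + r by rewrite lerDl.
by rewrite -(U_translate Sf t0 r_ge0) addr0 ((U_process Sf).2 _ _ _ le_tau le_t0).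
Qed.

Lemma absorbing_finite_net eps : 0 < eps -> exists s : seq X, forall C, bounded_set C ->
  exists te, forall f, Sigma f -> forall t tau, te <= t - tau -> forall x, C x ->
  exists2 p, p \in s & `|U f t tau x - p| < eps.
Proof.
move=> eps_gt0; have [M [M_fin M_abs]] := U_dissipative eps_gt0.
have [s M_eq] := (finite_seqP M).1 M_fin; rewrite {}M_eq in M_abs.
exists s => C C_bd.
have [te te_abs] := M_abs C C_bd; exists te => f Sf t tau le_te x Cx.
by have [p ps] := te_abs f Sf t tau le_te _ (ex_intro2 _ _ x Cx erefl); exists p.
Qed.

Lemma absorbing_norm_bound : exists rho : R, forall C, bounded_set C ->
  exists te, forall f, Sigma f -> forall t tau, te <= t - tau -> forall x, C x ->
  `|U f t tau x| < rho.
Proof.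
have [s net] := absorbing_finite_net ltr01.
have [r s_le] : exists r : R, forall p, p \in s -> `|p| <= r.
  by exists (\big[Order.max/0]_(p <- s) `|p|) => p ps; exact: le_bigmax_seq.
exists (r + 1) => C C_bd; have [te te_net] := net C C_bd.
exists te => f Sf t tau le_te x Cx; have [p ps near_p] := te_net f Sf t tau le_te x Cx.
have := s_le p ps; have := ler_normD (U f t tau x - p) p; rewrite subrK; lra.
Qed.

Section LimitTrajectory.
Variable F : set_system nat.
Context {FF : ProperFilter F}.
Hypotheses (F_ultra : forall A, F A \/ F (~` A)) (F_cofinite : \oo `<=` F).
Variables (n0 : option nat) (h : nat -> R).
Hypotheses (h_index : match n0 return Prop with Some N => is_true (2 <= N)%N | None => True end)
  (h0 : h 0%N = 0)
  (h_incr : forall k, seq_index n0 k.+1 -> h k < h k.+1)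
  (h_closed : forall (fn : nat -> L) (f : L) (xn : nat -> X) (xi : nat -> X),
       (forall m, Sigma (fn m)) -> Sigma f -> fn @ \oo --> f ->
       (forall k, seq_index n0 k -> (fun m => U (fn m) (h k) 0 (xn m)) @ \oo --> xi k) ->
       forall k, seq_index n0 k -> U f (h k) 0 (xi 0%N) = xi k).
Variables (C : set X) (gs : nat -> L) (s : nat -> R) (xs : nat -> X).
Hypotheses (C_bounded : bounded_set C) (gs_Sigma : forall m, Sigma (gs m))
  (s_ge : forall m, m%:R <= s m) (xs_C : forall m, C (xs m)).

Definition orbit_point t m := U (gs m) t (- s m) (xs m).

Lemma eventually_s_ge (r : R) : F [set m | r <= s m].
Proof.
have [N N_gt] := exists_nat_gt r; apply: F_cofinite; exists N => // m /= le_Nm.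
by apply: le_trans (ltW N_gt) (le_trans _ (s_ge m)); rewrite ler_nat.
Qed.

Lemma orbit_point_cvg t : cvg (orbit_point t @ F).
Proof.
apply: ultra_finite_nets_cvg => [A|eps eps_gt0]; first exact: F_ultra.
have [net net_abs] := absorbing_finite_net eps_gt0; have [te te_net] := net_abs C C_bounded.
exists net.
suff : F [set m | exists2 p, p \in net & `|orbit_point t m - p| < eps] by [].
apply: filterS (eventually_s_ge (te - t)) => m /= le_s.
by apply: (te_net _ (gs_Sigma m) t (- s m)) (xs_C m); lra.
Qed.

Local Notation w t := (lim (orbit_point t @ F)).

Lemma symbol_cluster : exists f, Sigma f /\ gs @ F --> f.
Proof.
have [f [Sf cl_f]] := Sigma_compact (F := gs @ F) _ (filterS (fun m _ => gs_Sigma m) filterT).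
exists f; split => // B f_B; case: (F_ultra (gs @^-1` B)) => // nB.
by have [y [nBy By]] := cl_f (~` B) _ nB f_B.
Qed.

Definition symbol_lim := projT1 (cid symbol_cluster).

Lemma symbol_lim_Sigma : Sigma symbol_lim.
Proof. exact: (projT2 (cid symbol_cluster)).1. Qed.

Lemma T_symbol_cvg t0 : (fun m => T t0 (gs m)) @ F --> T t0 symbol_lim.
Proof.
have [_ gs_cvg] := projT2 (cid symbol_cluster).
have gs_within : gs @ F --> within Sigma (nbhs symbol_lim).
  move=> B /gs_cvg gsB; have gsB' : F [set m | Sigma (gs m) -> B (gs m)] := gsB.
  suff : F [set m | B (gs m)] by [].
  by apply: filterS gsB' => m /= /(_ (gs_Sigma m)).
have T_cont :=
  (@subspace_continuousP _ Sigma _ (T t0)).1 (@T_continuous t0) _ symbol_lim_Sigma.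
exact: cvg_trans (cvg_fmap2 gs_within) T_cont.
Qed.

Lemma index1 : seq_index n0 1.
Proof. by move: h_index; case: n0. Qed.

Lemma h_ge0 k : seq_index n0 k -> 0 <= h k.
Proof.
elim: k => [|k IH] hk; first by rewrite h0.
have hk' : seq_index n0 k by move: hk; case: n0 => //= N; exact: ltnW.
exact: le_trans (IH hk') (ltW (h_incr hk)).
Qed.

Lemma h1_gt0 : 0 < h 1%N.
Proof. by have := h_incr (k := 0) index1; rewrite h0. Qed.

(* Along a diagonal subsequence all the countably many limits needed by asymptotic
   closedness are realized simultaneously. *)
Lemma lim_orbit_step t0 : U (T t0 symbol_lim) (h 1%N) 0 (w t0) = w (t0 + h 1%N).
Proof.
pose E i := [set m | ball (T t0 symbol_lim) i.+1%:R^-1 (T t0 (gs m)) /\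
  (forall k, (k <= i)%N -> `|w (t0 + h k) - orbit_point (t0 + h k) m| < i.+1%:R^-1) /\
  - s m <= t0].
have invS_gt0 i : 0 < i.+1%:R^-1 :> R by rewrite invr_gt0.
have FE i : F (E i).
  apply: filterI; first exact: cvg_ball _ (@T_symbol_cvg t0) _ (invS_gt0 i).
  apply: filterI; last by apply: filterS (eventually_s_ge (- t0)) => m /=; lra.
  apply: filter_forall_leq => k.
  exact: (cvgrPdist_lt _ _).1 (@orbit_point_cvg (t0 + h k)) _ (invS_gt0 i).
have [phi Ephi] := filter_diagonal FE.
have symbols_cvg : (fun n => T t0 (gs (phi n))) @ \oo --> T t0 symbol_lim.
  apply/cvg_ballP => eps eps_gt0; have [i i_lt] := exists_invS_lt eps_gt0.
  exists i => // n /= le_in; have [near_n _] := Ephi n i le_in.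
  exact: le_ball (ltW i_lt) _ near_n.
have orbits_cvg k : seq_index n0 k ->
    (fun n => U (T t0 (gs (phi n))) (h k) 0 (orbit_point t0 (phi n))) @ \oo --> w (t0 + h k).
  move=> hk; apply/cvgrPdist_lt => eps eps_gt0; have [i i_lt] := exists_invS_lt eps_gt0.
  exists (i + k)%N => // n /= le_n; have [_ [near_n le_s]] := Ephi n (i + k)%N le_n.
  rewrite /orbit_point U_shift ?h_ge0 //.
  apply: lt_le_trans (near_n k (leq_addl i k)) _.
  exact: le_trans (ler_invS _ (leq_addr k i)) (ltW i_lt).
have := h_closed (fun n => Sigma_T t0 (gs_Sigma (phi n))) (Sigma_T t0 symbol_lim_Sigma)
  symbols_cvg orbits_cvg index1.
by rewrite h0 addr0.
Qed.

Local Notation P j := (- (j%:R * h 1%N)).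

Lemma lim_grid_step j : U symbol_lim (P j) (P j.+1) (w (P j.+1)) = w (P j).
Proof.
have -> : P j = P j.+1 + h 1%N by rewrite -natr1; ring.
have := @U_translate _ symbol_lim_Sigma (P j.+1) (h 1%N) 0 (ltW h1_gt0).
by rewrite addr0 => ->; rewrite lim_orbit_step.
Qed.

Definition lim_trajectory :=
  glued_trajectory (U symbol_lim) (h 1%N) (fun j => w (P j)).

Lemma lim_norm_bound : exists rho, forall t, `|w t| <= rho.
Proof.
have [rho rho_abs] := absorbing_norm_bound; exists rho => t.
rewrite leNgt; apply/negP => rho_lt.
have [te te_abs] := rho_abs C C_bounded.
have gap_gt0 : 0 < `|w t| - rho by rewrite subr_gt0.
have near_w : F [set m | `|w t - orbit_point t m| < `|w t| - rho].
  exact: (cvgrPdist_lt _ _).1 (@orbit_point_cvg t) _ gap_gt0.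
have [m [/= near_m le_s]] := filter_ex (filterI near_w (eventually_s_ge (te - t))).
have := te_abs _ (gs_Sigma m) t (- s m) ltac:(lra) _ (xs_C m).
have := ler_normD (w t - orbit_point t m) (orbit_point t m); rewrite subrK.
rewrite /orbit_point in near_m *; lra.
Qed.

Lemma lim_trajectory_bounded : bounded_set (range lim_trajectory).
Proof.
have [rho rho_abs] := absorbing_norm_bound.
have [rho' w_le] := lim_norm_bound.
have [te te_abs] :=
  rho_abs _ (bounded_set_of_norm_le (A := [set x | `|x| <= rho']) (fun _ => id)).
apply: (bounded_set_of_norm_le (rho := rho)) => _ [t _ <-].
set j := grid_index (h 1%N) (t - `|te|).
have le_j : P j <= t - `|te| := grid_index_le h1_gt0 _.
have le_jt : P j <= t by have := normr_ge0 te; lra.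
rewrite /lim_trajectory (glued_trajectoryE (U_process symbol_lim_Sigma) h1_gt0 lim_grid_step le_jt).
apply/ltW/(te_abs _ symbol_lim_Sigma); last exact: w_le.
by have := ler_norm te; lra.
Qed.

Lemma orbit_point_cvg_kernel : exists2 z, K z & orbit_point 0 @ F --> z.
Proof.
exists (w 0); last exact: orbit_point_cvg.
have glued_process := U_process symbol_lim_Sigma.
exists symbol_lim; first exact: symbol_lim_Sigma.
exists lim_trajectory.
  split; first exact: lim_trajectory_bounded.
  by move=> t tau; apply: (glued_trajectory_flow glued_process h1_gt0 lim_grid_step).
by rewrite /lim_trajectory (glued_trajectory0 glued_process h1_gt0 lim_grid_step) mul0r oppr0.
Qed.

End LimitTrajectory.

Lemma kernel_cluster (C : set X) (gs : nat -> L) (s : nat -> R) (xs : nat -> X) :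
  bounded_set C -> (forall m, Sigma (gs m)) -> (forall m, m%:R <= s m) -> (forall m, C (xs m)) ->
  exists2 z, K z & forall eps, 0 < eps -> forall N, exists2 m, (N <= m)%N &
    `|z - U (gs m) 0 (- s m) (xs m)| < eps.
Proof.
move=> C_bd gs_Sigma s_ge xs_C.
have [G [G_ultra cofin_G]] := ultraFilterLemma (F := \oo) _.
have G_proper : ProperFilter G := @ultra_proper _ _ G_ultra.
have G_ultraVC A : G A \/ G (~` A) := in_ultra_setVsetC A G_ultra.
have [n0 [h [h_index [h0 [h_incr h_closed]]]]] := U_asymp_closed.
have [z Kz z_lim] := @orbit_point_cvg_kernel G G_proper G_ultraVC cofin_G n0 h h_index h0
  h_incr h_closed C gs s xs C_bd gs_Sigma s_ge xs_C.
exists z => // eps eps_gt0 N.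
have near_z : G [set m | `|z - orbit_point gs s xs 0 m| < eps].
  exact: (cvgrPdist_lt _ _).1 z_lim _ eps_gt0.
have ge_N : G [set m | (N <= m)%N] by apply: cofin_G; exists N.
by have [m [near_m le_Nm]] := filter_ex (filterI near_z ge_N); exists m.
Qed.

Lemma kernel_trajectory_bound : exists rho, forall f, Sigma f -> forall u,
  complete_bounded_trajectory (U f) u -> forall t, `|u t| <= rho.
Proof.
have [rho rho_abs] := absorbing_norm_bound; exists rho => f Sf u [u_bd u_flow] t.
have [te te_abs] := rho_abs _ u_bd.
have le1 : t - `|te| <= t by have := normr_ge0 te; lra.
have le2 : te <= t - (t - `|te|) by have := ler_norm te; lra.
rewrite (u_flow t (t - `|te|) le1); apply/ltW/(te_abs f Sf _ _ le2).
by exists (t - `|te|).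
Qed.

Lemma kernel_closed : closed K.
Proof.
move=> z cl_z; have [rho traj_le] := kernel_trajectory_bound.
have approx m : exists fu : L * (R -> X), Sigma fu.1 /\
    complete_bounded_trajectory (U fu.1) fu.2 /\ `|z - fu.2 0| < m.+1%:R^-1.
  have invS_gt0 : 0 < m.+1%:R^-1 :> R by rewrite invr_gt0.
  have [_ [[f Sf [u u_traj ->]] near_u]] := cl_z _ (nbhsx_ballx z _ invS_gt0).
  by exists (f, u); split => //; move: near_u; rewrite -ball_normE.
have [fu fuP] := choice approx.
have ball_bd := bounded_set_of_norm_le (A := [set x : X | `|x| <= rho]) (fun _ => id).
have [z' Kz' z'_cluster] := kernel_cluster (gs := fun m => (fu m).1) (s := fun m => m%:R)
  (xs := fun m => (fu m).2 (- m%:R)) ball_bd (fun m => (fuP m).1) (fun m => lexx _)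
  (fun m => traj_le _ (fuP m).1 _ (fuP m).2.1 _).
suff dist_le0 : `|z - z'| <= 0 by move: dist_le0; rewrite normr_le0 subr_eq0 => /eqP ->.
apply/ler_addgt0Pl => eps eps_gt0; rewrite addr0.
have eps2_gt0 : 0 < eps / 2 by rewrite divr_gt0.
have [N N_lt] := exists_invS_lt eps2_gt0.
have [m le_Nm near_m] := z'_cluster _ eps2_gt0 N.
have [_ [[_ flow_m] near_z]] := fuP m.
rewrite -flow_m ?oppr_le0 // in near_m.
have := ler_invS R le_Nm.
have := ler_distD ((fu m).2 0) z z'; rewrite distrC in near_m; move: (m.+1%:R^-1) (N.+1%:R^-1) near_z N_lt => a b; lra.
Qed.

Lemma kernel_compact : compact K.
Proof.
rewrite compact_ultra => G G_ultra GK.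
have G_proper : ProperFilter G := @ultra_proper _ _ G_ultra.
have /cvg_ex[z Gz] : cvg G.
  apply: ultra_finite_nets_cvg => [A|eps eps_gt0]; first exact: in_ultra_setVsetC A G_ultra.
  have [net net_abs] := absorbing_finite_net eps_gt0; exists net.
  apply: filterS GK => _ [f Sf [u [u_bd u_flow] ->]].
  have [te te_net] := net_abs _ u_bd.
  have le_te : - `|te| <= 0 by rewrite oppr_le0 normr_ge0.
  rewrite (u_flow 0 _ le_te); apply: (te_net f Sf); last by exists (- `|te|).
  by rewrite sub0r opprK ler_norm.
exists z; split => //; apply: kernel_closed => B /Gz GB.
exact: filter_ex (filterI GK GB).
Qed.

Lemma kernel_attracting : unif_attracting Sigma U K.
Proof.
move=> C C_bd eps eps_gt0.
suff [T0 T0_near] : exists T0, forall t tau, T0 <= t - tau -> forall f, Sigma f ->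
    forall x, C x -> exists2 xi, K xi & `|U f t tau x - xi| <= eps.
  exists T0 => t tau le_T0; apply: ge_ereal_sup => _ [f Sf <-].
  by apply: hdist_le => _ [x Cx <-]; exact: T0_near.
apply: contrapT => not_near.
have far m : exists p : (R * R) * (L * X), m%:R <= p.1.1 - p.1.2 /\ Sigma p.2.1 /\
    C p.2.2 /\ forall xi, K xi -> eps < `|U p.2.1 p.1.1 p.1.2 p.2.2 - xi|.
  apply: contrapT => none; apply: not_near; exists m%:R => t tau le_m f Sf x Cx.
  apply: contrapT => far_x; apply: none; exists ((t, tau), (f, x)).
  do 3!(split; first by []).
  by move=> xi Kxi; rewrite ltNge; apply/negP => le_eps; apply: far_x; exists xi.
have [p pP] := choice far.
have [z Kz z_cluster] := kernel_cluster (gs := fun m => T (p m).1.1 (p m).2.1)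
  (s := fun m => (p m).1.1 - (p m).1.2) (xs := fun m => (p m).2.2) C_bd
  (fun m => Sigma_T _ (pP m).2.1) (fun m => (pP m).1) (fun m => (pP m).2.2.1).
have [m _] := z_cluster _ eps_gt0 0%N.
move: (pP m); case: (p m) => [[t tau] [f x]] /= [le_m [Sf [_ far_m]]].
have le0 : - (t - tau) <= 0 by rewrite oppr_le0; exact: le_trans (ler0n _ m) le_m.
rewrite -(U_translate Sf t le0) addr0 (_ : t + - (t - tau) = tau); last by ring.
by have := far_m z Kz; rewrite distrC; lra.
Qed.

Lemma kernel_minimal K' : compact K' -> unif_attracting Sigma U K' -> K `<=` K'.
Proof.
move=> K'_compact K'_attr _ [f Sf [u [u_bd u_flow] ->]].
apply: (compact_closed (@norm_hausdorff _ X) K'_compact) => B /nbhs_ex[d near_d].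
have d2_gt0 : 0 < d%:num / 2 by rewrite divr_gt0.
have [T0 T0_attr] := K'_attr _ u_bd _ d2_gt0.
have le_T0 : T0 <= 0 - - `|T0| by rewrite sub0r opprK ler_norm.
have in_sup : [set hdist (U f' 0 (- `|T0|) @` range u) K' | f' in Sigma]
    (hdist (U f 0 (- `|T0|) @` range u) K') by exists f.
have hd : (hdist (U f 0 (- `|T0|) @` range u) K' < (d%:num)%:E)%E.
  apply: le_lt_trans (le_trans (ereal_sup_ubound in_sup) (T0_attr _ _ le_T0)) _.
  by rewrite lte_fin; have := gt0 d; lra.
have u0_in : (U f 0 (- `|T0|) @` range u) (u 0).
  by exists (u (- `|T0|)); [exists (- `|T0|) | rewrite -u_flow // oppr_le0 normr_ge0].
have [xi K'xi near_xi] := hdist_lt hd u0_in.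
by exists xi; split => //; apply: near_d; rewrite -ball_normE.
Qed.

Lemma kernel_sections_uniform_global_attractor : is_uniform_global_attractor Sigma U K.
Proof.
split; first exact: kernel_compact.
by split; [exact: kernel_attracting | exact: kernel_minimal].
Qed.

End UniformAttractor.

Theorem theorem7p3
  (R : realType) (X : completeNormedModType R)
  (L : metricType R) (ev : L -> R -> X) (ev_inj : injective ev)
  (T : R -> L -> L) (hT : forall h f t, ev (T h f) t = ev f (h + t))
  (g : L)
  (g_tc : compact (closure (range (fun h => T h g))))
  (hT_maps : forall h, T h @` closure (range (fun h => T h g))
                         `<=` closure (range (fun h => T h g)))
  (hT_cont : forall h, {within closure (range (fun h => T h g)), continuous (T h)})
  (U : L -> R -> R -> X -> X)
  (hU : forall f, closure (range (fun h => T h g)) f -> is_process (U f))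
  (hU_transl : forall f, closure (range (fun h => T h g)) f ->
     forall h t tau, tau <= t -> U f (h + t) (h + tau) = U (T h f) t tau)
  (hdiss : unif_totally_dissipative (closure (range (fun h => T h g))) U)
  (hclosed : asymptotically_closed (closure (range (fun h => T h g))) U) :
  exists A : set X,
    is_uniform_global_attractor (closure (range (fun h => T h g))) U A /\
    A = [set x | exists2 f, closure (range (fun h => T h g)) f &
                 exists2 u, complete_bounded_trajectory (U f) u & x = u 0].
Proof.
exists (kernel_sections (closure (range (fun h => T h g))) U); split => //.
exact: kernel_sections_uniform_global_attractor g_tc hT_maps hT_cont hU hU_transl hdiss hclosed.
Qed.
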